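(* Let $H$ be a homogeneous relation on a finite set $V$. Define $s:\mathcal P(V)\to\mathbb R$ by $s(X)=|\mathcal S_X|$ for nonempty $X\subseteq V$ and $s(\emptyset)=-|V|$. Then $s$ is submodular: for all $X,Y\subseteq V$, $s(X)+s(Y)\ge s(X\cup Y)+s(X\cap Y)$.
   Context: $V$ is a finite set and $\mathcal P(V)$ its power set. A reflectless triple is a triple $(x,y,z)\in V^3$ with $x\neq y$ and $x\neq z$, written $(x|yz)$. A homogeneous relation $H$ on $V$ is a set of reflectless triples (we write $H(s|xy)$ when $(s|xy)\in H$) such that for every $s\in V$ the binary relation $H_s=\{(x,y): H(s|xy)\}$ is an equivalence relation on $V\setminus\{s\}$. For $X\subseteq V$ and $z\in V\setminus X$, $z$ distinguishes (splits) $X$ if there exist $x,y\in X$ with not $H(z|xy)$. $\mathcal S_X$ denotes the set of all elements of $V\setminus X$ distinguishing $X$. *)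

From mathcomp Require Import all_boot all_order all_algebra.
Set Implicit Arguments. Unset Strict Implicit. Unset Printing Implicit Defensive.
Import Order.TTheory GRing.Theory Num.Theory.

(* A ternary relation on V: [H s x y] means H(s|xy). *)
Definition trel (V : finType) := V -> V -> V -> bool.

Definition reflectless (V : finType) (H : trel V) : Prop :=
  forall s x y, H s x y -> x != s /\ y != s.

Definition homogeneous (V : finType) (H : trel V) : Prop :=
  reflectless H /\
  forall s : V,
    (forall x, x != s -> H s x x) /\
    (forall x y, H s x y -> H s y x) /\
    (forall x y z, H s x y -> H s y z -> H s x z).

Definition distinguishes (V : finType) (H : trel V) (z : V) (X : {set V}) : bool :=
  [exists x in X, exists y in X, ~~ H z x y].

Definition splitters (V : finType) (H : trel V) (X : {set V}) : {set V} :=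
  [set z in ~: X | distinguishes H z X].

Definition sfun (R : numDomainType) (V : finType) (H : trel V) (X : {set V}) : R :=
  if X == set0 then (- (#|V|%:R))%R else ((#|splitters H X|)%:R)%R.

From mathcomp Require Import all_boot all_order all_algebra.
Import Order.TTheory GRing.Theory Num.Theory.
Set Implicit Arguments. Unset Strict Implicit. Unset Printing Implicit Defensive.
Local Open Scope ring_scope.

(* If X and Y share a point w, then z fails to split X :|: Y as soon as it
   splits neither X nor Y: every element of X :|: Y is H_z-equivalent to w.
   Hence S_(X :|: Y) and S_(X :&: Y) lie in S_X :|: S_Y and their intersection lies
   in S_X :&: S_Y, and submodularity follows by inclusion-exclusion.  When X
   and Y are disjoint the value -|V| of the empty set absorbs everything. *)

Section Splitters.

Variables (V : finType) (H : trel V).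

Lemma distinguishesPn z (X : {set V}) :
  reflect {in X &, forall x y, H z x y} (~~ distinguishes H z X).
Proof.
apply: (iffP negP) => [nX x y xX yX | allX].
  apply/negPn/negP=> nxy; apply: nX.
  by apply/existsP; exists x; rewrite xX; apply/existsP; exists y; rewrite yX.
by case/existsP=> x /andP[xX /existsP[y /andP[yX /negP]]]; apply; apply: allX.
Qed.

Lemma distinguishesS z (A B : {set V}) :
  A \subset B -> distinguishes H z A -> distinguishes H z B.
Proof.
move=> sAB; apply: contraTT => /distinguishesPn allB.
by apply/distinguishesPn => x y xA yA; apply: allB; apply: (subsetP sAB).
Qed.

Hypothesis homH : homogeneous H.

Lemma distinguishesU z (X Y : {set V}) : X :&: Y != set0 ->
  distinguishes H z (X :|: Y) -> distinguishes H z X || distinguishes H z Y.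
Proof.
case/set0Pn=> w /setIP[wX wY]; apply: contraTT; rewrite negb_or.
case/andP=> /distinguishesPn allX /distinguishesPn allY.
have [_ [Hsym Htr]] := homH.2 z.
have toW a : a \in X :|: Y -> H z a w.
  by case/setUP=> [aX|aY]; [apply: allX | apply: allY].
by apply/distinguishesPn=> x y xU yU; apply: Htr (toW x xU) (Hsym _ _ (toW y yU)).
Qed.

Lemma splittersI_sub (X Y : {set V}) :
  splitters H (X :&: Y) \subset splitters H X :|: splitters H Y.
Proof.
apply/subsetP=> z; rewrite !inE => /andP[zNXY dXY].
rewrite (distinguishesS (subsetIl X Y) dXY) (distinguishesS (subsetIr X Y) dXY).
by rewrite !andbT -negb_and.
Qed.

Lemma splittersU_sub (X Y : {set V}) : X :&: Y != set0 ->
  splitters H (X :|: Y) \subset splitters H X :|: splitters H Y.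
Proof.
move=> XYn0; apply/subsetP=> z; rewrite !inE negb_or => /andP[/andP[-> ->]].
by move/(distinguishesU XYn0).
Qed.

Lemma splittersUI_sub (X Y : {set V}) :
  splitters H (X :|: Y) :&: splitters H (X :&: Y)
    \subset splitters H X :&: splitters H Y.
Proof.
apply/subsetP=> z; rewrite !inE negb_or => /andP[/andP[/andP[-> ->] _]].
case/andP=> _ dXY.
by rewrite (distinguishesS (subsetIl X Y) dXY) (distinguishesS (subsetIr X Y) dXY).
Qed.

Lemma card_splitters_submod (X Y : {set V}) : X :&: Y != set0 ->
  (#|splitters H (X :|: Y)| + #|splitters H (X :&: Y)|
     <= #|splitters H X| + #|splitters H Y|)%N.
Proof.
move=> XYn0; rewrite -cardsUI -[(#|splitters H X| + _)%N]cardsUI.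
apply: leq_add; apply: subset_leq_card; last exact: splittersUI_sub.
by rewrite subUset splittersU_sub ?splittersI_sub.
Qed.

End Splitters.

Theorem mainTheorem6 (R : realFieldType) (V : finType) (H : trel V) :
  homogeneous H ->
  forall X Y : {set V},
    sfun R H (X :|: Y) + sfun R H (X :&: Y) <= sfun R H X + sfun R H Y.
Proof.
move=> homH X Y.
have [->|Xn0] := eqVneq X set0; first by rewrite set0U set0I addrC.
have [->|Yn0] := eqVneq Y set0; first by rewrite setU0 setI0.
have XYn0 : X :|: Y != set0.
  by case/set0Pn: Xn0 => x xX; apply/set0Pn; exists x; rewrite inE xX.
rewrite /sfun (negPf Xn0) (negPf Yn0) (negPf XYn0).
have [_|meetXY] := eqVneq (X :&: Y) set0.
  by apply: (@le_trans _ _ 0); rewrite ?subr_le0 ?ler_nat ?max_card ?addr_ge0.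
by rewrite -!natrD ler_nat card_splitters_submod.
Qed.
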